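(* For each $n$, let $G_s(\alpha,k)$ be a uniform random temporal star on a star with $n$ vertices, where $\alpha=\alpha(n)$ and $k=k(n)$ satisfy $\alpha\ge 2n$ and $k\ge 6n\ln n$. Then the probability that $G_s(\alpha,k)$ is explorable (all its edges can be explored) tends to $1$ as $n\to\infty$.
   Context: A uniform random temporal star $G_s(\alpha,k)$: take a star $G_s$ with center $c$ and $n-1$ leaves; each edge independently receives $k$ labels, each chosen independently and uniformly at random from $\{1,2,\dots,\alpha\}$ (labels are the discrete times at which the edge is available). A journey is a sequence of time edges $(u,u_1,l_1),(u_1,u_2,l_2),\dots$, each $l_t$ a label of the edge traversed, with strictly increasing labels. The temporal star is explorable if there is a journey starting and ending at $c$ that visits every vertex. *)

From HB Require Import structures.
From mathcomp Require Import all_boot all_order all_algebra.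
From mathcomp Require Import all_classical all_reals all_analysis.
Set Implicit Arguments. Unset Strict Implicit. Unset Printing Implicit Defensive.
Import Order.TTheory GRing.Theory Num.Theory.

(* A star with n vertices: center [None] and n-1 leaves [Some i], i : 'I_n.-1.
   The only edges are {None, Some i}; we identify edge {c, Some i} with i. *)
Definition star_vertex (n : nat) := option 'I_n.-1.

(* A temporal labelling of the star with k labels per edge, each label in
   {1, ..., alpha}: the j-th label of edge i is (lab i j).+1. *)
Definition star_labelling (n alpha k : nat) :=
  {ffun 'I_n.-1 -> {ffun 'I_k -> 'I_alpha}}.

Definition edge_has_label (n alpha k : nat) (lab : star_labelling n alpha k)
  (u v : star_vertex n) (l : nat) : Prop :=
  match u, v with
  | None, Some i | Some i, None => exists j : 'I_k, (lab i j : nat).+1 = l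
  | _, _ => False
  end.

(* [journey_from lab u t s]: starting at vertex u, where the last used label
   was t (t = 0 initially, labels are >= 1), the sequence s of
   (next vertex, label) steps is a journey: each step traverses an edge
   of the star at one of its labels, labels strictly increasing. *)
Fixpoint journey_from (n alpha k : nat) (lab : star_labelling n alpha k)
  (u : star_vertex n) (t : nat) (s : seq (star_vertex n * nat)) : Prop :=
  match s with
  | [::] => True
  | (v, l) :: s' => edge_has_label lab u v l /\ (t < l)%N /\
                    journey_from lab v l s'
  end.

Definition explorable (n alpha k : nat) (lab : star_labelling n alpha k) : Prop :=
  exists s : seq (star_vertex n * nat),
    journey_from lab None 0 s /\
    last None (map fst s) = None /\
    (forall v : star_vertex n, v = None \/ v \in map fst s).

Definition prob_explorable (R : realType) (n alpha k : nat) : R :=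
  (#|[set lab : star_labelling n alpha k | `[< explorable lab >]]|%:R /
   #|{: star_labelling n alpha k}|%:R)%R.

(* Split the label range into 2(n-1) consecutive blocks of length
   m = alpha / (2(n-1)). If every edge i has a label in block 2i and one in block 2i+1,
   the journey that visits leaf 0, 1, ... in turn, leaving the centre in block
   2i and coming back in block 2i+1, explores the star. Each of the 2(n-1)
   events "edge i misses block b" has probability (1 - m/alpha)^k
   <= exp(-k/(4n)) <= n^(-3/2), so the union bound leaves a failure
   probability of at most 2 n^(-1/2). *)

From HB Require Import structures.
From mathcomp Require Import all_boot all_order all_algebra.
From mathcomp Require Import all_classical all_reals all_analysis.
From mathcomp Require Import unstable zify ring lra.
Set Implicit Arguments. Unset Strict Implicit. Unset Printing Implicit Defensive.
Import Order.TTheory GRing.Theory Num.Theory.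
Import numFieldNormedType.Exports.

Lemma card_ffun_row_in (I J T : finType) (i : I) (P : pred T) :
  #|[set f : {ffun I -> {ffun J -> T}} | [forall j, P (f i j)]]| * #|T| ^ #|J|
  = #|P| ^ #|J| * #|{ffun I -> {ffun J -> T}}|.
Proof.
pose F x := if x == i then mem (ffun_on P) else mem (@predT {ffun J -> T}).
have -> : #|[set f : {ffun I -> {ffun J -> T}} | [forall j, P (f i j)]]|
          = #|family F|.
  apply: eq_card => f; rewrite inE; apply/forallP/familyP => [Pfi x|Ff].
    by rewrite /F; case: eqP => [->|_] //=; apply/ffun_onP.
  by move: (Ff i); rewrite /F eqxx => /ffun_onP.
rewrite card_family foldrE big_map big_enum /= (bigD1 i) //=.
have -> : #|F i| = #|P| ^ #|J| by rewrite /F eqxx card_ffun_on.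
have -> : \prod_(x | x != i) #|F x| = \prod_(x | x != i) #|{ffun J -> T}|.
  by apply: eq_bigr => x /negbTE Fx; rewrite /F Fx; apply: eq_card.
have -> : #|{ffun I -> {ffun J -> T}}|
          = #|{ffun J -> T}| * \prod_(x | x != i) #|{ffun J -> T}|.
  by rewrite [LHS](card_ffun _ _) -prod_nat_const (bigD1 i).
by rewrite -card_ffun mulnAC mulnA.
Qed.

Definition block alpha m b := [set x : 'I_alpha | b * m <= x < b * m + m].

Lemma card_setC_block alpha m b : b * m + m <= alpha ->
  #|~: block alpha m b| <= alpha - m.
Proof.
move=> fits.
have shift_lt (j : 'I_m) : b * m + j < alpha by have := ltn_ord j; lia.
pose shift j := Ordinal (shift_lt j).
have shift_inj : injective shift.
  by move=> j j' /(congr1 val) /= ?; apply: val_inj => /=; lia.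
have : m <= #|block alpha m b|.
  rewrite -[m in m <= _]card_ord -(card_imset _ shift_inj).
  apply: subset_leq_card; apply/fintype.subsetP => _ /imsetP [j _ ->].
  by rewrite inE /=; have := ltn_ord j; lia.
have := cardsC (block alpha m b); rewrite card_ord.
lia.
Qed.

Section Tour.
Variables (n alpha k : nat) (lab : star_labelling n alpha k).
Variables (out back : 'I_n.-1 -> nat).
Hypothesis out_label : forall i, edge_has_label lab None (Some i) (out i).
Hypothesis back_label : forall i, edge_has_label lab (Some i) None (back i).
Hypothesis out_lt_back : forall i, out i < back i.
Hypothesis back_lt_out : forall i j : 'I_n.-1, i < j -> back i < out j.

Definition tour (r : seq 'I_n.-1) : seq (star_vertex n * nat) :=
  flatten [seq [:: (Some i, out i); (None, back i)] | i <- r].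

Lemma journey_tour r t : sorted (fun i j : 'I_n.-1 => i < j) r ->
  (forall i, i \in r -> t < out i) -> journey_from lab None t (tour r).
Proof.
elim: r t => [|i r IHr] t //= r_sorted t_lt.
split; first exact: out_label.
split; first exact: t_lt (mem_head _ _).
split; first exact: back_label.
split; first exact: out_lt_back.
apply: IHr => [|j j_in]; first exact: path_sorted r_sorted.
apply: back_lt_out.
have ltn_ord_trans : transitive (fun i j : 'I_n.-1 => i < j).
  by move=> ? ? ?; apply: ltn_trans.
by have /allP/(_ j j_in) := order_path_min ltn_ord_trans r_sorted.
Qed.

Lemma last_tour r : last None (map fst (tour r)) = None.
Proof. by elim: r. Qed.

Lemma mem_tour r i : i \in r -> Some i \in map fst (tour r).
Proof.
elim: r => //= j r IHr; rewrite in_cons => /orP [/eqP ->|i_in].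
  by rewrite mem_head.
by rewrite !in_cons IHr ?orbT.
Qed.

Lemma explorable_tour : explorable lab.
Proof.
exists (tour (enum 'I_n.-1)); split; last split.
- apply: journey_tour => [|i _].
    by have := iota_ltn_sorted 0 n.-1; rewrite -val_enum_ord sorted_map.
  by have [j <-] := out_label i.
- exact: last_tour.
- by case=> [i|]; [right; apply: mem_tour; rewrite mem_enum | left].
Qed.

End Tour.

Lemma explorable_of_blocks n alpha k m (lab : star_labelling n alpha k) :
  (forall (i : 'I_n.-1) (b : 'I_2), exists j, lab i j \in block alpha m (2 * i + b)) ->
  explorable lab.
Proof.
move=> hits.
have [x x_in] := fin_all_exists (fun i => hits i ord0).
have [y y_in] := fin_all_exists (fun i => hits i ord_max).
apply: (@explorable_tour _ _ _ lab (fun i => (lab i (x i)).+1) (fun i => (lab i (y i)).+1)).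
- by move=> i; exists (x i).
- by move=> i; exists (y i).
- by move=> i; move: (x_in i) (y_in i); rewrite !inE /=; nia.
move=> i j lt_ij; move: (y_in i) (x_in j); rewrite !inE /=.
have : (2 * i + 2) * m <= 2 * j * m by rewrite leq_mul2r; lia.
lia.
Qed.

Definition explorable_labellings n alpha k :=
  [set lab : star_labelling n alpha k | `[< explorable lab >]].

Lemma card_not_explorable n alpha k m : 2 * n.-1 * m <= alpha ->
  #|~: explorable_labellings n alpha k| * alpha ^ k
    <= 2 * n.-1 * (alpha - m) ^ k * #|{: star_labelling n alpha k}|.
Proof.
move=> blocks_fit.
pose miss (p : 'I_n.-1 * 'I_2) := [set lab : star_labelling n alpha k |
  [forall j, lab p.1 j \in ~: block alpha m (2 * p.1 + p.2)]].
have cover : ~: explorable_labellings n alpha k \subset \bigcup_p miss p.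
  apply/fintype.subsetP => lab; rewrite !inE => /asboolPn not_expl.
  apply/bigcupP; apply: contra_notP not_expl => no_miss.
  apply: (@explorable_of_blocks _ _ _ m) => i b.
  have : lab \notin miss (i, b) by apply/negP => miss_ib; apply: no_miss; exists (i, b).
  by rewrite inE negb_forall => /existsP [j]; rewrite inE negbK; exists j.
have card_miss p : #|miss p| * alpha ^ k
                   <= (alpha - m) ^ k * #|{: star_labelling n alpha k}|.
  case: p => i b.
  have := @card_ffun_row_in _ 'I_k _ i (mem (~: block alpha m (2 * i + b))).
  rewrite !card_ord => ->; rewrite leq_mul2r; apply/orP; right.
  have [->//|k_gt0] := posnP k.
  rewrite leq_exp2r // card_setC_block //.
  by have := ltn_ord i; have := ltn_ord b; nia.
have card_cover : #|~: explorable_labellings n alpha k| <= \sum_p #|miss p|.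
  by apply: leq_trans (subset_leq_card cover) _; apply: card_big_setU.
apply: leq_trans (leq_mul card_cover (leqnn _)) _.
rewrite big_distrl /=; apply: leq_trans; first by apply: leq_sum => p _; exact: card_miss.
by rewrite sum_nat_const card_prod !card_ord (mulnC n.-1) !mulnA.
Qed.

Local Open Scope classical_set_scope.
Local Open Scope ring_scope.

Lemma prob_explorable_le1 (R : realType) n alpha k : prob_explorable R n alpha k <= 1.
Proof.
rewrite /prob_explorable; have [->|L_gt0] := posnP #|{: star_labelling n alpha k}|.
  by rewrite invr0 mulr0.
by rewrite ler_pdivrMr ?ltr0n // mul1r ler_nat max_card.
Qed.

Lemma subrX_le_expR (R : realType) (a y : R) (k : nat) : 0 < a -> 0 <= y <= a ->
  (a - y) ^+ k <= a ^+ k * expR (- (k%:R * y / a)).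
Proof.
move=> a_gt0 /andP [y_ge0 y_le_a].
have sub_le : a - y <= a * expR (- (y / a)).
  have := expR_ge1Dx (- (y / a)); rewrite -(ler_pM2l a_gt0) => /(le_trans _); apply.
  by rewrite mulrDr mulr1 mulrN mulrCA divff ?gt_eqF // mulr1.
have -> : - (k%:R * y / a) = k%:R * - (y / a) by rewrite mulrN mulrA.
rewrite expRM_natl -exprMn.
apply: lerXn2r => //; rewrite ?nnegrE ?subr_ge0 //.
by rewrite mulr_ge0 ?expR_ge0 // ltW.
Qed.

Lemma cube_mul_expR_sq_le1 (R : realType) (x kappa : R) : 0 < x -> 6 * x * ln x <= kappa ->
  x ^+ 3 * expR (- (kappa / (4 * x))) ^+ 2 <= 1.
Proof.
move=> x_gt0 kappa_ge.
rewrite -[x in x ^+ 3](lnK (_ : x \in Num.pos)) ?posrE // -!expRM_natl -expRD expR_le1.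
have : 6 * x * ln x / (4 * x) <= kappa / (4 * x) by rewrite ler_pM2r ?invr_gt0 ?mulr_gt0.
have -> : 6 * x * ln x / (4 * x) = 3 / 2 * ln x by field; rewrite gt_eqF.
lra.
Qed.

Lemma prob_explorable_deficit (R : realType) n alpha k m :
  (0 < alpha)%N -> (m <= alpha)%N -> (2 * n.-1 * m <= alpha)%N ->
  1 - prob_explorable R n alpha k
    <= 2 * n.-1%:R * expR (- (k%:R * m%:R / alpha%:R)).
Proof.
move=> alpha_gt0 m_le_alpha blocks_fit.
set L := #|{: star_labelling n alpha k}|.
set C := #|~: explorable_labellings n alpha k|.
set E := expR _.
have L_gt0 : (0 < L)%N by rewrite /L card_ffun card_ffun !card_ord !expn_gt0 alpha_gt0.
have -> : 1 - prob_explorable R n alpha k = C%:R / L%:R.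
  rewrite /prob_explorable -/L -[X in X - _](divff (_ : L%:R != 0 :> R)).
    by rewrite -mulrBl -natrB ?max_card // /L -(cardsC (explorable_labellings n alpha k)) addKn.
  by rewrite pnatr_eq0 -lt0n.
have alpha_gt0R : 0 < alpha%:R :> R by rewrite ltr0n.
rewrite ler_pdivrMr ?ltr0n // -(ler_pM2r (exprn_gt0 k alpha_gt0R)).
have count : C%:R * alpha%:R ^+ k
             <= 2 * n.-1%:R * (alpha%:R - m%:R) ^+ k * L%:R :> R.
  by rewrite -natrB // -!natrX -!natrM ler_nat card_not_explorable.
apply: le_trans count _.
have decay : (alpha%:R - m%:R) ^+ k <= alpha%:R ^+ k * E :> R.
  by apply: subrX_le_expR => //; rewrite ler0n ler_nat.
rewrite [X in _ <= X](_ : _ = 2 * n.-1%:R * (alpha%:R ^+ k * E) * L%:R); last by ring.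
by rewrite ler_wpM2r // ler_wpM2l.
Qed.

Lemma prob_explorable_deficit_le (R : realType) n alpha k :
  (2 <= n)%N -> (2 * n <= alpha)%N ->
  1 - prob_explorable R n alpha k <= 2 * n.-1%:R * expR (- (k%:R / (4 * n%:R))).
Proof.
move=> n_ge2 alpha_ge.
(* Blocks of length alpha / (2(n-1)), which is at least alpha / (4n). *)
set m := (alpha %/ (2 * n.-1))%N.
have blocks_fit : (2 * n.-1 * m <= alpha)%N by rewrite mulnC leq_trunc_div.
have m_gt0 : (0 < m)%N by rewrite divn_gt0; lia.
have alpha_le : (alpha <= 4 * n * m)%N.
  have := ltn_ceil alpha (_ : 0 < 2 * n.-1)%N; rewrite -/m.
  by move=> /(_ ltac:(lia)); nia.
have alpha_gt0 : (0 < alpha)%N by lia.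
have m_le_alpha : (m <= alpha)%N by nia.
apply: le_trans (prob_explorable_deficit R k alpha_gt0 m_le_alpha blocks_fit) _.
rewrite ler_wpM2l // ler_expR lerN2 -!mulrA ler_wpM2l // ler_pdivlMr ?ltr0n //.
rewrite mulrC ler_pdivrMr ?mulr_gt0 ?ltr0n //; last by lia.
by rewrite -[4]/(4%:R) -!natrM ler_nat mulnC.
Qed.

Lemma sq_deficit_prob_explorable_le (R : realType) n alpha k :
  (2 <= n)%N -> (2 * n <= alpha)%N -> 6 * n%:R * ln (n%:R : R) <= k%:R ->
  (1 - prob_explorable R n alpha k) ^+ 2 * n%:R <= 4.
Proof.
move=> n_ge2 alpha_ge k_ge.
have D_le := prob_explorable_deficit_le R k n_ge2 alpha_ge.
have D_ge0 : 0 <= 1 - prob_explorable R n alpha k.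
  by rewrite subr_ge0 prob_explorable_le1.
have x_gt0 : 0 < n%:R :> R by rewrite ltr0n; lia.
have cube := cube_mul_expR_sq_le1 x_gt0 k_ge.
set x := n%:R in x_gt0 D_le cube *; set F := expR _ in D_le cube.
set D := 1 - _ in D_ge0 D_le *; set N := n.-1%:R in D_le.
have N_ge0 : 0 <= N := ler0n _ _.
have N_le_x : N <= x by rewrite ler_nat leq_pred.
have F_gt0 : 0 < F := expR_gt0 _.
have D_sq : D ^+ 2 <= (2 * N * F) ^+ 2.
  by rewrite lerXn2r // nnegrE !mulr_ge0 // ltW.
have N_sq : N ^+ 2 * (F ^+ 2 * x) <= x ^+ 2 * (F ^+ 2 * x).
  apply: ler_wpM2r; first exact: mulr_ge0 (exprn_ge0 _ (ltW F_gt0)) (ltW x_gt0).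
  by rewrite lerXn2r ?nnegrE // ltW.
have := ler_wpM2r (ltW x_gt0) D_sq.
lra.
Qed.

Lemma cvg_to1_of_sq_deficit_le (R : realType) (u : nat -> R) (c : R) (N0 : nat) :
  (forall n, u n <= 1) -> (forall n, (N0 <= n)%N -> (1 - u n) ^+ 2 * n%:R <= c) ->
  u @ \oo --> (1 : R).
Proof.
move=> u_le1 deficit_le; apply/cvgrPdist_lt => eps eps_gt0.
exists (maxn N0 (Num.Def.trunc (c / eps ^+ 2)).+1) => // n /=.
rewrite geq_max => /andP [n_ge n_gt]; rewrite ger0_norm ?subr_ge0 //.
have eps2_gt0 : 0 < eps ^+ 2 by rewrite exprn_gt0.
have c_lt : c < eps ^+ 2 * n%:R.
  rewrite -ltr_pdivrMl //; apply: lt_le_trans (truncnS_gt _) _.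
  by rewrite ler_nat mulrC.
have : (1 - u n) ^+ 2 < eps ^+ 2.
  by rewrite -(ltr_pM2r (_ : 0 < n%:R)) ?(le_lt_trans (deficit_le _ _)) // ltr0n; lia.
by rewrite ltr_pXn2r // nnegrE ?subr_ge0 ?(ltW eps_gt0).
Qed.

Theorem theorem7 (R : realType) (alpha k : nat -> nat)
  (halpha : forall n : nat, (2 * n <= alpha n)%N)
  (hk : forall n : nat, 6 * n%:R * ln (n%:R : R) <= (k n)%:R) :
  (fun n : nat => prob_explorable R n (alpha n) (k n)) @ \oo --> (1 : R).
Proof.
apply: (@cvg_to1_of_sq_deficit_le _ _ 4 2) => [n|n n_ge2].
  exact: prob_explorable_le1.
exact: sq_deficit_prob_explorable_le.
Qed.
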